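(* If $\varphi\in\mathrm{sHML}_F$ (resp. $\varphi\in\mathrm{cHML}_F$) is closed, then there is some $\psi\in\mathrm{sHML}$ (resp. $\psi\in\mathrm{cHML}$) such that $[\![\psi]\!]_F=[\![\varphi]\!]_F$.
   Context: Fix a finite set $\mathrm{Act}$ of actions. recHML formulae: $\varphi::=\mathrm{tt}\mid\mathrm{ff}\mid\varphi\vee\varphi\mid\varphi\wedge\varphi\mid\langle A\rangle\varphi\mid[A]\varphi\mid\min X.\varphi\mid\max X.\varphi\mid X$ ($A\subseteq\mathrm{Act}$), guarded. Fragments: $\mathrm{sHML}_F$: $\varphi::=\mathrm{tt}\mid\mathrm{ff}\mid[A]\varphi\mid\varphi\vee\varphi\mid\varphi\wedge\varphi\mid\max X.\varphi\mid X$; $\mathrm{cHML}_F$: $\varphi::=\mathrm{tt}\mid\mathrm{ff}\mid\langle A\rangle\varphi\mid\varphi\vee\varphi\mid\varphi\wedge\varphi\mid\min X.\varphi\mid X$; $\mathrm{sHML}$: $\varphi::=\mathrm{tt}\mid\mathrm{ff}\mid[A]\varphi\mid\varphi\wedge\varphi\mid\max X.\varphi\mid X$; $\mathrm{cHML}$: $\varphi::=\mathrm{tt}\mid\mathrm{ff}\mid\langle A\rangle\varphi\mid\varphi\vee\varphi\mid\min X.\varphi\mid X$. Finfinite traces $\mathrm{Fin}=\mathrm{Act}^\omega\cup\mathrm{Act}^*$; finfinite semantics: $[\![\mathrm{tt}]\!]_F=\mathrm{Fin}$, $[\![\mathrm{ff}]\!]_F=\emptyset$, $\vee,\wedge$ union/intersection,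 $[\![\langle A\rangle\varphi,\sigma]\!]_F=\{ag\mid a\in A,g\in[\![\varphi,\sigma]\!]_F\}$, $[\![[A]\varphi,\sigma]\!]_F=\{g\mid\forall a\in A,\forall g'.\ g=ag'\Rightarrow g'\in[\![\varphi,\sigma]\!]_F\}$, $\min/\max$ as least/greatest fixpoints, $[\![X,\sigma]\!]_F=\sigma(X)$. *)

From mathcomp Require Import all_boot.
Set Implicit Arguments. Unset Strict Implicit. Unset Printing Implicit Defensive.

Section RecHML.
Variable Act : finType.

(* Finfinite traces Fin = Act^omega U Act^*: possibly-finite, possibly-infinite
   sequences, i.e. coinductive lists. *)
CoInductive trace : Type :=
| tnil : trace
| tcons : Act -> trace -> trace.

Inductive form : Type :=
| Ftt : form
| Fff : form
| For : form -> form -> form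
| Fand : form -> form -> form
| Fdia : {set Act} -> form -> form
| Fbox : {set Act} -> form -> form
| Fmin : nat -> form -> form
| Fmax : nat -> form -> form
| Fvar : nat -> form.

Fixpoint free_in (X : nat) (f : form) : Prop :=
  match f with
  | Ftt | Fff => False
  | For f1 f2 | Fand f1 f2 => free_in X f1 \/ free_in X f2
  | Fdia _ f1 | Fbox _ f1 => free_in X f1
  | Fmin Y f1 | Fmax Y f1 => Y <> X /\ free_in X f1
  | Fvar Y => Y = X
  end.

Definition closedF (f : form) : Prop := forall X, ~ free_in X f.

Fixpoint guarded_in (X : nat) (f : form) : Prop :=
  match f with
  | Ftt | Fff => True
  | For f1 f2 | Fand f1 f2 => guarded_in X f1 /\ guarded_in X f2
  | Fdia _ _ | Fbox _ _ => True
  | Fmin Y f1 | Fmax Y f1 => Y = X \/ guarded_in X f1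
  | Fvar Y => Y <> X
  end.

Fixpoint guarded (f : form) : Prop :=
  match f with
  | Ftt | Fff | Fvar _ => True
  | For f1 f2 | Fand f1 f2 => guarded f1 /\ guarded f2
  | Fdia _ f1 | Fbox _ f1 => guarded f1
  | Fmin X f1 | Fmax X f1 => guarded_in X f1 /\ guarded f1
  end.

Fixpoint is_sHMLF (f : form) : Prop :=
  match f with
  | Ftt | Fff | Fvar _ => True
  | Fbox _ f1 | Fmax _ f1 => is_sHMLF f1
  | For f1 f2 | Fand f1 f2 => is_sHMLF f1 /\ is_sHMLF f2
  | _ => False
  end.

Fixpoint is_cHMLF (f : form) : Prop :=
  match f with
  | Ftt | Fff | Fvar _ => True
  | Fdia _ f1 | Fmin _ f1 => is_cHMLF f1
  | For f1 f2 | Fand f1 f2 => is_cHMLF f1 /\ is_cHMLF f2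
  | _ => False
  end.

Fixpoint is_sHML (f : form) : Prop :=
  match f with
  | Ftt | Fff | Fvar _ => True
  | Fbox _ f1 | Fmax _ f1 => is_sHML f1
  | Fand f1 f2 => is_sHML f1 /\ is_sHML f2
  | _ => False
  end.

Fixpoint is_cHML (f : form) : Prop :=
  match f with
  | Ftt | Fff | Fvar _ => True
  | Fdia _ f1 | Fmin _ f1 => is_cHML f1
  | For f1 f2 => is_cHML f1 /\ is_cHML f2
  | _ => False
  end.

Definition tset := trace -> Prop.
Definition env := nat -> tset.
Definition upd (s : env) (X : nat) (S : tset) : env :=
  fun Y => if Y == X then S else s Y.
Definition empty_env : env := fun _ _ => False.

(* Finfinite semantics; min/max are the least/greatest fixpoints given by
   Knaster-Tarski: intersection of pre-fixpoints / union of post-fixpoints. *)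
Fixpoint semF (f : form) (s : env) : tset :=
  match f with
  | Ftt => fun _ => True
  | Fff => fun _ => False
  | For f1 f2 => fun g => semF f1 s g \/ semF f2 s g
  | Fand f1 f2 => fun g => semF f1 s g /\ semF f2 s g
  | Fdia A f1 => fun g => exists a g', a \in A /\ g = tcons a g' /\ semF f1 s g'
  | Fbox A f1 => fun g => forall a g', a \in A -> g = tcons a g' -> semF f1 s g'
  | Fmin X f1 => fun g =>
      forall S : tset, (forall h, semF f1 (upd s X S) h -> S h) -> S g
  | Fmax X f1 => fun g =>
      exists S : tset, (forall h, S h -> semF f1 (upd s X S) h) /\ S g
  | Fvar X => s X
  end.

End RecHML.

(* A closed sHML_F formula denotes a safety property: a set of finfinite traces
   that is closed under finite prefixes and contains every trace all of whose
   finite prefixes it contains.  For a guarded formula, the denotations of its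
   subformulas form a finite family whose one-letter derivatives are positive
   Boolean combinations of members of the family.  Positive DNFs over this
   family therefore form a finite deterministic automaton for the formula, and
   a safety property recognised by a finite automaton is defined by the sHML
   formula that unfolds the automaton with greatest fixpoints and boxes,
   forbidding the states whose language misses the empty trace.  Negation
   exchanges cHML_F with sHML_F and sHML with cHML, which reduces the second
   claim to the first. *)

From mathcomp Require Import all_boot.
From mathcomp Require Import boolp.
From Stdlib Require List.
Set Implicit Arguments. Unset Strict Implicit. Unset Printing Implicit Defensive.

Section Fragments.
Variable Act : finType.
Notation trace := (trace Act).
Notation form := (form Act).
Notation tset := (tset Act).
Notation env := (env Act).

Fixpoint trace_of (w : seq Act) : trace :=
  if w is a :: w' then tcons a (trace_of w') else tnil Act.

Fixpoint is_prefix (w : seq Act) (g : trace) : Prop :=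
  match w, g with
  | [::], _ => True
  | a :: w', tcons b g' => a = b /\ is_prefix w' g'
  | _ :: _, tnil => False
  end.

Lemma is_prefix_trace_of w : is_prefix w (trace_of w).
Proof. by elim: w => //= a w ->. Qed.

Lemma is_prefix_trans u w g :
  is_prefix u (trace_of w) -> is_prefix w g -> is_prefix u g.
Proof.
elim: u w g => [|a u IH] [|b w] [|c g] //= [-> Hu] [-> Hw].
by split=> //; exact: IH Hu Hw.
Qed.

Lemma is_prefix_leq u w g :
  is_prefix u g -> is_prefix w g -> size u <= size w -> is_prefix u (trace_of w).
Proof.
elim: u w g => [|a u IH] [|b w] [|c g] //= [-> Hu] [-> Hw] Hs.
by split=> //; exact: IH Hu Hw Hs.
Qed.

Lemma upd_mono (r : env) X (S S' : tset) :
  (forall g, S g -> S' g) -> forall Y g, upd r X S Y g -> upd r X S' Y g.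
Proof. by move=> HS Y g; rewrite /upd; case: eqP => // _; exact: HS. Qed.

Lemma upd_forall (P : tset -> Prop) (r : env) X S :
  (forall Y, P (r Y)) -> P S -> forall Y, P (upd r X S Y).
Proof. by move=> Hr HS Y; rewrite /upd; case: eqP. Qed.

Lemma upd_free_mono (r r' : env) X (f : form) S :
  (forall Y, X <> Y /\ free_in Y f -> forall g, r Y g -> r' Y g) ->
  forall Y, free_in Y f -> forall g, upd r X S Y g -> upd r' X S Y g.
Proof.
move=> Hr Y HY g; rewrite /upd; case: eqP => // NY; apply: Hr.
by split=> // EX; apply: NY.
Qed.

Lemma semF_mono (f : form) (r r' : env) :
  (forall X, free_in X f -> forall g, r X g -> r' X g) ->
  forall g, semF f r g -> semF f r' g.
Proof.
elim: f r r' => [||f1 IH1 f2 IH2|f1 IH1 f2 IH2|A f1 IH|A f1 IH|X f1 IH|X f1 IH|X]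
  r r' Hr g //=.
- by case=> H; [left; apply: IH1 H | right; apply: IH2 H] => Y HY; apply: Hr;
    [left|right].
- by case=> H1 H2; split; [apply: IH1 H1 | apply: IH2 H2] => Y HY; apply: Hr;
    [left|right].
- by case=> a [g' [Ha [-> H]]]; exists a, g'; do 2!split=> //; exact: IH Hr _ H.
- by move=> H a g' Ha Eg; exact: IH Hr _ (H a g' Ha Eg).
- move=> H S HS; apply: H => h Hh; apply: HS.
  exact: IH (upd_free_mono (S := S) Hr) _ Hh.
- case=> S [HS Sg]; exists S; split=> // h /HS.
  exact: IH (upd_free_mono (S := S) Hr) h.
- exact: Hr.
Qed.

Lemma semF_closed (f : form) (r r' : env) g : closedF f -> semF f r g <-> semF f r' g.
Proof. by move=> Cf; split; apply: semF_mono => X /Cf. Qed.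

Lemma semF_max_unfold X (f : form) (r : env) g :
  semF (Fmax X f) r g <-> semF f (upd r X (semF (Fmax X f) r)) g.
Proof.
set M := semF (Fmax X f) r.
have post h : M h -> semF f (upd r X M) h.
  case=> S [HS Sh]; apply: semF_mono (HS _ Sh) => Y _.
  by apply: upd_mono => k Sk; exists S.
split; first exact: post.
move=> Hg; exists (semF f (upd r X M)); split=> // h Hh.
by apply: semF_mono Hh => Y _; apply: upd_mono; exact: post.
Qed.

Lemma semF_min_unfold X (f : form) (r : env) g :
  semF (Fmin X f) r g <-> semF f (upd r X (semF (Fmin X f) r)) g.
Proof.
set M := semF (Fmin X f) r.
have pre h : semF f (upd r X M) h -> M h.
  move=> Hh S HS; apply: (HS); apply: semF_mono Hh => Y _.
  by apply: upd_mono => k /(_ S HS).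
split; last exact: pre.
move=> Mg; apply: Mg => h Hh; apply: semF_mono Hh => Y _.
by apply: upd_mono; exact: pre.
Qed.

Fixpoint dual (f : form) : form :=
  match f with
  | Ftt => Fff Act
  | Fff => Ftt Act
  | For f1 f2 => Fand (dual f1) (dual f2)
  | Fand f1 f2 => For (dual f1) (dual f2)
  | Fdia A f1 => Fbox A (dual f1)
  | Fbox A f1 => Fdia A (dual f1)
  | Fmin X f1 => Fmax X (dual f1)
  | Fmax X f1 => Fmin X (dual f1)
  | Fvar X => Fvar Act X
  end.

Lemma free_in_dual X (f : form) : free_in X (dual f) = free_in X f.
Proof.
by elim: f => [||? IH1 ? IH2|? IH1 ? IH2|? ? IH|? ? IH|? ? IH|? ? IH|?] //=;
  rewrite ?IH1 ?IH2 ?IH.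
Qed.

Lemma guarded_in_dual X (f : form) : guarded_in X (dual f) = guarded_in X f.
Proof.
by elim: f => [||? IH1 ? IH2|? IH1 ? IH2|? ? IH|? ? IH|? ? IH|? ? IH|?] //=;
  rewrite ?IH1 ?IH2 ?IH.
Qed.

Lemma guarded_dual (f : form) : guarded (dual f) = guarded f.
Proof.
by elim: f => [||? IH1 ? IH2|? IH1 ? IH2|? ? IH|? ? IH|? ? IH|? ? IH|?] //=;
  rewrite ?IH1 ?IH2 ?IH ?guarded_in_dual.
Qed.

Lemma is_sHMLF_dual (f : form) : is_sHMLF (dual f) = is_cHMLF f.
Proof.
by elim: f => [||? IH1 ? IH2|? IH1 ? IH2|? ? IH|? ? IH|? ? IH|? ? IH|?] //=;
  rewrite ?IH1 ?IH2 ?IH.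
Qed.

Lemma is_cHML_dual (f : form) : is_cHML (dual f) = is_sHML f.
Proof.
by elim: f => [||? IH1 ? IH2|? IH1 ? IH2|? ? IH|? ? IH|? ? IH|? ? IH|?] //=;
  rewrite ?IH1 ?IH2 ?IH.
Qed.

Lemma upd_compl (r r' : env) X (S S' : tset) :
  (forall Y g, r' Y g <-> ~ r Y g) -> (forall g, S' g <-> ~ S g) ->
  forall Y g, upd r' X S' Y g <-> ~ upd r X S Y g.
Proof. by move=> Hr HS Y g; rewrite /upd; case: eqP. Qed.

Lemma semF_dual (f : form) (r r' : env) : (forall X g, r' X g <-> ~ r X g) ->
  forall g, semF (dual f) r' g <-> ~ semF f r g.
Proof.
have notK (S : tset) g : S g <-> ~ ~ S g by split=> [Sg []|/contrapT].
elim: f r r' => [||f1 IH1 f2 IH2|f1 IH1 f2 IH2|A f1 IH|A f1 IH|X f1 IH|X f1 IH|X]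
  r r' Hr g /=.
- by split=> // /(_ I).
- by split=> // _ [].
- by rewrite (IH1 r r' Hr) (IH2 r r' Hr) not_orP.
- by rewrite (IH1 r r' Hr) (IH2 r r' Hr) not_andP.
- split=> [H [a [g' [Ha [Eg Hg]]]]|H a g' Ha Eg].
    exact: (IH r r' Hr g').1 (H a g' Ha Eg) Hg.
  by apply/(IH r r' Hr) => Hg; apply: H; exists a, g'.
- split=> [[a [g' [Ha [Eg /(IH r r' Hr) Hg]]]] H|]; first exact: Hg (H a g' Ha Eg).
  move=> /existsNP [a /existsNP [g' /not_implyP [Ha /not_implyP [Eg Hg]]]].
  by exists a, g'; do 2!split=> //; apply/(IH r r' Hr).
- split=> [[S [HS Sg]] Hmin|/existsNP [S /not_implyP [HS NSg]]].
    apply: (Hmin (fun h => ~ S h)) Sg => h Hh Sh.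
    by apply/(IH _ _ (upd_compl X Hr (fun g => notK S g))): Hh; exact: HS.
  exists (fun h => ~ S h); split=> // h NSh.
  apply/(IH _ _ (upd_compl X Hr (fun g => iff_refl _))) => Hh.
  exact: NSh (HS h Hh).
- split=> [Hmin [S [HS Sg]]|Hn S HS].
    apply: (Hmin (fun h => ~ S h)) Sg => h.
    move=> /(IH _ _ (upd_compl X Hr (fun g => iff_refl _))) Hh Sh.
    exact: Hh (HS h Sh).
  apply: contrapT => NSg; apply: Hn; exists (fun h => ~ S h); split=> // h NSh.
  apply: contrapT => Hh; apply: NSh; apply: HS.
  by apply/(IH _ _ (upd_compl X Hr (fun g => notK S g))).
- exact: Hr.
Qed.

Lemma closedF_dual (f : form) : closedF (dual f) <-> closedF f.
Proof. by split=> Hf X; have := Hf X; rewrite free_in_dual. Qed.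

Lemma semF_dual_closed (f : form) (r : env) g :
  closedF f -> semF (dual f) r g <-> ~ semF f r g.
Proof.
move=> Cf; rewrite (semF_closed r (fun _ _ => False) g (proj2 (closedF_dual f) Cf)).
rewrite (semF_dual f (r := fun _ _ => True)); last by move=> X h; split=> // /(_ I).
by rewrite (semF_closed (fun _ _ => True) r g Cf).
Qed.

Definition prefix_closed (L : tset) :=
  forall g w, L g -> is_prefix w g -> L (trace_of w).
Definition limit_closed (L : tset) :=
  forall g, (forall w, is_prefix w g -> L (trace_of w)) -> L g.
Definition safety (L : tset) := prefix_closed L /\ limit_closed L.

Lemma safety_ext (L L' : tset) : (forall g, L g <-> L' g) -> safety L -> safety L'.
Proof.
move=> E [PL LL]; split=> [g w /E Lg Hw | g Hg]; first exact/E/(PL _ _ Lg Hw).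
by apply/E/LL => w /Hg/E.
Qed.

Lemma safety0 : safety (fun _ => False).
Proof. by split=> [g w []|g /(_ [::] I)]. Qed.

Lemma safetyI (L1 L2 : tset) : safety L1 -> safety L2 -> safety (fun g => L1 g /\ L2 g).
Proof.
move=> [P1 C1] [P2 C2]; split=> [g w [H1 H2] Hw|g Hg].
  by split; [exact: P1 H1 Hw | exact: P2 H2 Hw].
by split; [apply: C1 | apply: C2] => w /Hg [].
Qed.

Lemma safety_bigcap (I : Type) (P : I -> Prop) (F : I -> tset) :
  (forall i, P i -> safety (F i)) -> safety (fun g => forall i, P i -> F i g).
Proof.
move=> HF; split=> [g w Hg Hw i Pi|g Hg i Pi].
  exact: (proj1 (HF i Pi)) _ _ (Hg i Pi) Hw.
by apply: (proj2 (HF i Pi)) => w /Hg; apply.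
Qed.

Lemma limit_closed_witness (L : tset) g :
  limit_closed L -> ~ L g -> exists w, is_prefix w g /\ ~ L (trace_of w).
Proof.
move=> LL NL; apply: contrapT => Hn; apply: NL; apply: LL => w Hw.
by apply: contrapT => Nw; apply: Hn; exists w.
Qed.

(* Of two prefixes of the same trace the shorter one is a prefix of the longer,
   so a bad prefix for [L1] and one for [L2] yield a common bad prefix. *)
Lemma safetyU (L1 L2 : tset) : safety L1 -> safety L2 -> safety (fun g => L1 g \/ L2 g).
Proof.
move=> [P1 C1] [P2 C2]; split.
  by move=> g w [H|H] Hw; [left; exact: P1 H Hw | right; exact: P2 H Hw].
move=> g Hg; apply: contrapT => /not_orP [N1 N2].
have [w1 [Hw1 {}N1]] := limit_closed_witness C1 N1.
have [w2 [Hw2 {}N2]] := limit_closed_witness C2 N2.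
have [Hs|Hs] := leqP (size w1) (size w2).
  case: (Hg _ Hw2) => [H|//]; exact: N1 (P1 _ _ H (is_prefix_leq Hw1 Hw2 Hs)).
case: (Hg _ Hw1) => [//|H]; exact: N2 (P2 _ _ H (is_prefix_leq Hw2 Hw1 (ltnW Hs))).
Qed.

Lemma safety_bigcup (I : eqType) (s : seq I) (F : I -> tset) :
  (forall i, i \in s -> safety (F i)) -> safety (fun g => exists2 i, i \in s & F i g).
Proof.
elim: s => [|i s IH] HF.
  by apply: safety_ext safety0 => g; split=> // -[].
have Hs : safety (fun g => exists2 j, j \in s & F j g).
  by apply: IH => j Hj; apply: HF; rewrite inE Hj orbT.
apply: safety_ext (safetyU (HF i (mem_head i s)) Hs) => g.
split=> [[H|[j Hj H]]|[j]]; first by exists i; rewrite ?mem_head.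
  by exists j; rewrite // inE Hj orbT.
by rewrite inE => /orP [/eqP ->|Hj] H; [left|right; exists j].
Qed.

Lemma safety_box (A : {set Act}) (L : tset) : safety L ->
  safety (fun g => forall a g', a \in A -> g = tcons a g' -> L g').
Proof.
move=> [PL LL]; split.
  move=> g [|b w] Hg Hw a g' Ha // [Eab <-]; subst b.
  case: g Hg Hw => // c g Hg [Eac Hw]; subst c.
  exact: PL (Hg a g Ha erefl) Hw.
move=> g Hg a g' Ha Eg; subst g; apply: LL => w Hw.
exact: Hg (a :: w) (conj erefl Hw) a (trace_of w) Ha erefl.
Qed.

Definition safety_closure (L : tset) : tset :=
  fun g => forall w, is_prefix w g -> exists2 h, L h & is_prefix w h.

Lemma safety_closure_safety (L : tset) : safety (safety_closure L).
Proof.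
split=> [g u Hg Hu w Hw|g Hg w Hw]; first exact: Hg _ (is_prefix_trans Hw Hu).
exact: (Hg w Hw w (is_prefix_trace_of w)).
Qed.

Lemma safety_closure_sub (L : tset) g : safety L -> safety_closure L g -> L g.
Proof. by move=> [PL LL] Hg; apply: LL => w /Hg [h Lh Hw]; exact: PL Lh Hw. Qed.

Lemma safety_semF (f : form) (r : env) :
  is_sHMLF f -> (forall X, safety (r X)) -> safety (semF f r).
Proof.
elim: f r => [||f1 IH1 f2 IH2|f1 IH1 f2 IH2|A f1 IH|A f1 IH|X f1 IH|X f1 IH|X]
  r //= Hf Hr.
- exact: safety0.
- by case: Hf => H1 H2; exact: safetyU (IH1 r H1 Hr) (IH2 r H2 Hr).
- by case: Hf => H1 H2; exact: safetyI (IH1 r H1 Hr) (IH2 r H2 Hr).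
- exact: safety_box (IH r Hf Hr).
(* The safety closure of a greatest fixpoint is a post-fixpoint, hence the
   greatest fixpoint is its own safety closure. *)
- set M := semF (Fmax X f1) r; pose C := safety_closure M.
  have post g : C g -> semF f1 (upd r X C) g.
    have safeF := IH _ Hf (upd_forall X Hr (safety_closure_safety M)).
    move=> Cg; apply: safety_closure_sub safeF _ => w /Cg [h Mh Hw].
    exists h => //; move/semF_max_unfold: Mh; apply: semF_mono => Y _.
    by apply: upd_mono => k Mk u Hu; exists k.
  apply: safety_ext (safety_closure_safety M) => g.
  by split=> [Cg|Mg w Hw]; [exists C | exists g].
Qed.

Section SafetyAutomaton.
Variables (Q : finType) (step : Q -> Act -> Q) (ok : Q -> bool).

Fixpoint fails_within (n : nat) (q : Q) (g : trace) : Prop :=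
  ~~ ok q \/
  match n, g with
  | n'.+1, tcons a g' => fails_within n' (step q a) g'
  | _, _ => False
  end.

Definition safe_from (q : Q) (g : trace) := forall n, ~ fails_within n q g.

Lemma fails_within_leq m n q g : m <= n -> fails_within m q g -> fails_within n q g.
Proof.
elim: m n q g => [|m IH] [|n] q g //= Hmn [NO|H]; try by left.
by case: g H => // a g' H; right; exact: IH H.
Qed.

Lemma safe_from_ok q g : safe_from q g -> ok q.
Proof. by move=> /(_ 0) /=; case: (ok q) => // /(_ (or_introl isT)). Qed.

Lemma safe_from_step q a g : safe_from q (tcons a g) -> safe_from (step q a) g.
Proof. by move=> H n Hn; apply: (H n.+1); right. Qed.

Definition var_of (q : Q) : nat := enum_rank q.

Lemma var_of_inj : injective var_of.
Proof. by move=> q q' /val_inj /enum_rank_inj. Qed.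

Lemma mem_uniq_card (V : seq Q) q : uniq V -> #|Q| <= size V -> q \in V.
Proof.
move=> uV HV; apply: contraT => qV.
have /card_uniqP /= qVsize : uniq (q :: V) by rewrite /= qV.
by have := leq_trans (max_card (mem (q :: V))) HV; rewrite qVsize ltnn.
Qed.

Lemma semF_bigand (h : Act -> form) (s : seq Act) (r : env) g :
  semF (foldr (@Fand Act) (Ftt Act) (map h s)) r g <-> forall a, a \in s -> semF (h a) r g.
Proof.
elim: s => [|b s IH] //=; rewrite IH; split=> [[Hb Hs] a|H].
  by rewrite inE => /predU1P [->|]; [exact: Hb | exact: Hs].
by split=> [|a Ha]; apply: H; rewrite inE ?eqxx ?Ha ?orbT.
Qed.

(* [X_q = max X_q. /\_a [a] X_(step q a)]; the states already on the path [V]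
   are referred to by their variables, so a fuel of [#|Q|] is never exhausted. *)
Fixpoint safety_formula (fuel : nat) (V : seq Q) (q : Q) : form :=
  if ~~ ok q then Fff Act else if q \in V then Fvar Act (var_of q) else
  if fuel is k.+1 then
    Fmax (var_of q) (foldr (@Fand Act) (Ftt Act)
      [seq Fbox [set a] (safety_formula k (q :: V) (step q a)) | a <- enum Act])
  else Fff Act.

Lemma safety_formula_complete fuel V q (r : env) :
  uniq V -> #|Q| <= size V + fuel ->
  (forall q', q' \in V -> forall h, safe_from q' h -> r (var_of q') h) ->
  forall g, safe_from q g -> semF (safety_formula fuel V q) r g.
Proof.
elim: fuel V q r => [|k IH] V q r uV HV Hr g Hg /=; rewrite (safe_from_ok Hg) /=.
all: case: ifPn => [qV|qV]; first exact: Hr.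
  by move: qV; rewrite mem_uniq_card // -[size V]addn0.
exists (safe_from q); split=> // h Hh; apply/semF_bigand => a _ b g' /set1P -> Eh; subst h.
apply: IH (safe_from_step Hh) => /=; first by rewrite qV.
  by rewrite addSnnS.
move=> q'; rewrite inE => /predU1P [->|q'V] h' H'; rewrite /upd; first by rewrite eqxx.
by case: eqP => [/var_of_inj Eq|_]; [rewrite -Eq q'V in qV | exact: Hr].
Qed.

Lemma ok_of_semF_safety_formula fuel V q (r : env) g :
  semF (safety_formula fuel V q) r g -> ok q.
Proof. by case: fuel => [|k] /=; case: (ok q). Qed.

Lemma safety_formula_sound n : forall fuel V q (r : env) g,
  (forall q', q' \in V -> forall h, r (var_of q') h -> ~ fails_within n q' h) ->
  semF (safety_formula fuel V q) r g -> ~ fails_within n q g.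
Proof.
elim: n => [|n IH] fuel V q r g Hr Hs; have okq := ok_of_semF_safety_formula Hs.
  by rewrite /= okq => -[].
have [qV|qV] := boolP (q \in V).
  by case: fuel Hs => [|k] Hs; rewrite /= okq qV in Hs; exact: Hr qV g Hs.
case: fuel Hs => [|k] Hs; rewrite /= okq (negbTE qV) in Hs => //.
have {}Hr q' : q' \in V -> forall h, r (var_of q') h -> ~ fails_within n q' h.
  by move=> q'V h Hh Hf; apply: Hr q'V h Hh (fails_within_leq (leqnSn n) Hf).
case: Hs => S [HS Sg]; rewrite /= okq => -[//|]; case: g Sg => // a g' Sg Hf.
have /semF_bigand /(_ a (mem_enum _ a) a g' (set11 a) erefl) := HS _ Sg.
move=> Hs'; apply: (IH k (q :: V) (step q a) _ g' _ Hs' Hf).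
move=> q'; rewrite inE => /predU1P [->|q'V] h; rewrite /upd.
  rewrite eqxx => Sh; apply: (IH k.+1 V q r h Hr).
  by rewrite /= okq (negbTE qV); exists S.
by case: eqP => [/var_of_inj Eq|_]; [rewrite -Eq q'V in qV | exact: Hr].
Qed.

Lemma safety_formula_correct q (r : env) g :
  semF (safety_formula #|Q| [::] q) r g <-> safe_from q g.
Proof.
split=> [H n|]; first exact: safety_formula_sound H.
exact: safety_formula_complete.
Qed.

Lemma safety_formula_free fuel V q X :
  free_in X (safety_formula fuel V q) -> exists2 q', q' \in V & X = var_of q'.
Proof.
elim: fuel V q => [|k IH] V q /=; case: (ok q) => //=; case: ifPn => qV //=;
  try by move=> <-; exists q.
case=> NX; elim: (enum Act) => //= a s IHs [/IH [q']|//].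
by rewrite inE => /predU1P [->|q'V] EX; [case: NX | exists q'].
Qed.

Lemma safety_formula_sHML fuel V q :
  is_sHML (safety_formula fuel V q) /\ guarded (safety_formula fuel V q).
Proof.
elim: fuel V q => [|k IH] V q /=; case: (ok q) => //=; case: ifP => //= _.
by split; [|split]; elim: (enum Act) => //= a s IHs; split=> //;
  case: (IH (q :: V) (step q a)).
Qed.

End SafetyAutomaton.

Fixpoint subsems (f : form) (r : env) : seq tset :=
  semF f r :: match f with
  | For f1 f2 | Fand f1 f2 => (subsems f1 r ++ subsems f2 r)%list
  | Fdia _ f1 | Fbox _ f1 => subsems f1 r
  | Fmin X f1 | Fmax X f1 => subsems f1 (upd r X (semF f r))
  | _ => [::]
  end.

Lemma subsemsE (f : form) (r : env) : subsems f r = semF f r :: behead (subsems f r).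
Proof. by case: f. Qed.

Lemma semF_In_subsems (f : form) (r : env) : List.In (semF f r) (subsems f r).
Proof. by rewrite subsemsE; left. Qed.

Lemma safety_subsems (f : form) (r : env) :
  is_sHMLF f -> (forall X, safety (r X)) -> List.Forall safety (subsems f r).
Proof.
elim: f r => [||f1 IH1 f2 IH2|f1 IH1 f2 IH2|A f1 IH|A f1 IH|X f1 IH|X f1 IH|X]
  r Hf Hr; constructor; try exact: safety_semF Hf Hr.
all: rewrite /= in Hf; try done.
- by case: Hf => H1 H2; apply/List.Forall_app; split; [exact: IH1 | exact: IH2].
- by case: Hf => H1 H2; apply/List.Forall_app; split; [exact: IH1 | exact: IH2].
- exact: IH.
- exact: IH Hf (upd_forall X Hr (safety_semF (f := Fmax X f1) Hf Hr)).
Qed.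

Definition deriv (a : Act) (L : tset) : tset := fun g => L (tcons a g).

Section DisjunctiveNormalForm.
Variable A : seq tset.
Notation N := (size A).

Definition atom (i : 'I_N) : tset := List.nth i A (fun _ => False).

Definition dnf_sem (P : {set {set 'I_N}}) : tset :=
  fun g => exists2 S, S \in P & forall i, i \in S -> atom i g.

Definition dnf_definable (L : tset) := exists P, forall g, L g <-> dnf_sem P g.

Lemma atom_In i : List.In (atom i) A.
Proof. exact/List.nth_In/ltP. Qed.

Lemma dnf_sem_atom i g : dnf_sem [set [set i]] g <-> atom i g.
Proof.
split=> [[S /set1P -> /(_ i (set11 i))] //|Hi].
by exists [set i]; rewrite ?in_set1 // => j /set1P ->.
Qed.

Lemma dnf_definable_ext (L L' : tset) :
  (forall g, L g <-> L' g) -> dnf_definable L -> dnf_definable L'.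
Proof. by move=> E [P HP]; exists P => g; rewrite -E. Qed.

Lemma dnf_definable_In L : List.In L A -> dnf_definable L.
Proof.
move=> /(List.In_nth _ _ (fun _ => False)) [n [/ltP Hn <-]].
by exists [set [set Ordinal Hn]] => g; rewrite dnf_sem_atom.
Qed.

Lemma dnf_definable0 : dnf_definable (fun _ => False).
Proof. by exists set0 => g; split=> // -[S]; rewrite in_set0. Qed.

Lemma dnf_definableT : dnf_definable (fun _ => True).
Proof.
exists [set set0] => g; split=> // _.
by exists set0; rewrite ?in_set1 // => i; rewrite in_set0.
Qed.

Lemma dnf_definableU (L1 L2 : tset) :
  dnf_definable L1 -> dnf_definable L2 -> dnf_definable (fun g => L1 g \/ L2 g).
Proof.
move=> [P HP] [Q HQ]; exists (P :|: Q) => g; rewrite HP HQ; split.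
  by case=> -[S HS HS']; exists S; rewrite // in_setU HS ?orbT.
by case=> S /setUP [HS|HS] HS'; [left|right]; exists S.
Qed.

Lemma dnf_sem_and (P Q : {set {set 'I_N}}) g :
  dnf_sem [set S :|: T | S in P, T in Q] g <-> dnf_sem P g /\ dnf_sem Q g.
Proof.
split=> [[U /imset2P [S T HS HT ->] HU]|[[S HS HS'] [T HT HT']]].
  by split; [exists S | exists T] => // i Hi; apply: HU; rewrite in_setU Hi ?orbT.
exists (S :|: T); first exact: imset2_f.
by move=> i /setUP [/HS'|/HT'].
Qed.

Lemma dnf_definableI (L1 L2 : tset) :
  dnf_definable L1 -> dnf_definable L2 -> dnf_definable (fun g => L1 g /\ L2 g).
Proof.
move=> [P HP] [Q HQ]; exists [set S :|: T | S in P, T in Q] => g.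
by rewrite dnf_sem_and HP HQ.
Qed.

Lemma dnf_definable_deriv_upd (r : env) X M (f : form) :
  guarded_in X f ->
  (forall Y a, ~ (X = Y \/ guarded_in Y f) -> dnf_definable (deriv a (r Y))) ->
  forall Y a, ~ guarded_in Y f -> dnf_definable (deriv a (upd r X M Y)).
Proof.
move=> GX Hr Y a NY; rewrite /upd; case: eqP => [EY|NXY]; first by rewrite EY in NY.
by apply: Hr => -[EX|//]; apply: NXY.
Qed.

(* Guardedness makes the derivative of a formula depend only on the
   derivatives of the variables occurring unguarded and on the denotations
   below the modalities, which are atoms. *)
Lemma dnf_definable_deriv_semF (f : form) (r : env) :
  List.incl (subsems f r) A -> guarded f ->
  (forall X a, ~ guarded_in X f -> dnf_definable (deriv a (r X))) ->
  forall a, dnf_definable (deriv a (semF f r)).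
Proof.
elim: f r => [||f1 IH1 f2 IH2|f1 IH1 f2 IH2|B f1 IH|B f1 IH|X f1 IH|X f1 IH|X]
  r Hsub Hg Hr a.
- exact: dnf_definableT.
- exact: dnf_definable0.
- have [_ /List.incl_app_inv [Hsub1 Hsub2]] := List.incl_cons_inv Hsub.
  case: Hg => G1 G2; apply: (dnf_definableU (IH1 r Hsub1 G1 _ a) (IH2 r Hsub2 G2 _ a));
    by move=> Y b NY; apply: Hr => -[].
- have [_ /List.incl_app_inv [Hsub1 Hsub2]] := List.incl_cons_inv Hsub.
  case: Hg => G1 G2; apply: (dnf_definableI (IH1 r Hsub1 G1 _ a) (IH2 r Hsub2 G2 _ a));
    by move=> Y b NY; apply: Hr => -[].
- have [_ /(_ _ (semF_In_subsems f1 r)) HA] := List.incl_cons_inv Hsub.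
  have [Ha|Ha] := boolP (a \in B).
    apply: dnf_definable_ext (dnf_definable_In HA) => g.
    by split=> [Lg|[b [g' [_ [[_ ->]]]]]] //; exists a, g.
  apply: dnf_definable_ext dnf_definable0 => g.
  by split=> // -[b [g' [Hb [[Eab _] _]]]]; rewrite Eab Hb in Ha.
- have [_ /(_ _ (semF_In_subsems f1 r)) HA] := List.incl_cons_inv Hsub.
  have [Ha|Ha] := boolP (a \in B).
    apply: dnf_definable_ext (dnf_definable_In HA) => g.
    by split=> [Lg b g' _ [_ <-] // | /(_ a g Ha erefl)].
  apply: dnf_definable_ext dnf_definableT => g.
  by split=> // _ b g' Hb [Eab _]; rewrite Eab Hb in Ha.
- have [_ Hsub1] := List.incl_cons_inv Hsub; case: Hg => GX G1.
  apply: dnf_definable_ext (IH _ Hsub1 G1 (dnf_definable_deriv_upd _ GX Hr) a) => g.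
  exact: iff_sym (semF_min_unfold X f1 r (tcons a g)).
- have [_ Hsub1] := List.incl_cons_inv Hsub; case: Hg => GX G1.
  apply: dnf_definable_ext (IH _ Hsub1 G1 (dnf_definable_deriv_upd _ GX Hr) a) => g.
  exact: iff_sym (semF_max_unfold X f1 r (tcons a g)).
- by apply: Hr; apply.
Qed.

Lemma dnf_definable_deriv_subsems (f : form) (r : env) :
  List.incl (subsems f r) A -> guarded f ->
  (forall X a, dnf_definable (deriv a (r X))) ->
  List.Forall (fun L => forall a, dnf_definable (deriv a L)) (subsems f r).
Proof.
elim: f r => [||f1 IH1 f2 IH2|f1 IH1 f2 IH2|B f1 IH|B f1 IH|X f1 IH|X f1 IH|X]
  r Hsub Hg Hr; constructor; try exact: dnf_definable_deriv_semF Hsub Hg (fun X a _ => Hr X a).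
all: have [_ Hsub'] := List.incl_cons_inv Hsub; rewrite //=.
- have [Hsub1 Hsub2] := List.incl_app_inv _ _ Hsub'; case: Hg => G1 G2.
  by apply/List.Forall_app; split; [exact: IH1 | exact: IH2].
- have [Hsub1 Hsub2] := List.incl_app_inv _ _ Hsub'; case: Hg => G1 G2.
  by apply/List.Forall_app; split; [exact: IH1 | exact: IH2].
- exact: IH.
- exact: IH.
- case: Hg => GX G1; apply: (IH _ Hsub' G1) => Y a.
  apply: (upd_forall (P := fun L => dnf_definable (deriv a L))) => [Z|]; first exact: Hr.
  exact: (dnf_definable_deriv_semF (f := Fmin X f1) Hsub (conj GX G1) (fun Z b _ => Hr Z b)).
- case: Hg => GX G1; apply: (IH _ Hsub' G1) => Y a.
  apply: (upd_forall (P := fun L => dnf_definable (deriv a L))) => [Z|]; first exact: Hr.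
  exact: (dnf_definable_deriv_semF (f := Fmax X f1) Hsub (conj GX G1) (fun Z b _ => Hr Z b)).
Qed.

(* The [a]-derivative of [dnf_sem P], represented canonically by all the
   conjunctions of atoms that entail it. *)
Definition dnf_step (P : {set {set 'I_N}}) (a : Act) : {set {set 'I_N}} :=
  [set T : {set 'I_N} |
    `[< forall g, (forall i, i \in T -> atom i g) -> dnf_sem P (tcons a g) >]].

Definition dnf_ok (P : {set {set 'I_N}}) : bool := `[< dnf_sem P (tnil Act) >].

Hypothesis atom_deriv : forall i a, dnf_definable (deriv a (atom i)).
Hypothesis atom_safety : forall i, safety (atom i).

Lemma dnf_sem_step P a g : dnf_sem (dnf_step P a) g <-> dnf_sem P (tcons a g).
Proof.
split=> [[T] /[!inE] /asboolP HT /HT //|[S SP HS]].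
exists [set j | `[< atom j g >]]; last by move=> j /[!inE] /asboolP.
rewrite inE; apply/asboolP => g' Hg'; exists S => // i /HS.
have [Pi HPi] := atom_deriv i a.
move=> /HPi [U UPi HU]; apply/HPi; exists U => // j /HU Hj.
by apply: Hg'; rewrite inE; apply/asboolP.
Qed.

Lemma safety_dnf_sem P : safety (dnf_sem P).
Proof.
pose F (S : {set 'I_N}) g := forall i, i \in S -> atom i g.
apply: safety_ext (safety_bigcup (s := enum P) (F := F) _) => [g|S _].
  by split=> -[S]; rewrite ?mem_enum => HS HSg; exists S; rewrite ?mem_enum.
exact: safety_bigcap.
Qed.

Lemma dnf_ok_sem P g : dnf_sem P g -> dnf_ok P.
Proof. by move=> HP; apply/asboolP; exact: (proj1 (safety_dnf_sem P)) g [::] HP I. Qed.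

Lemma dnf_sem_safe_from P g : dnf_sem P g <-> safe_from dnf_step dnf_ok P g.
Proof.
split=> [HP n|H].
  elim: n P g HP => [|n IH] P g HP; rewrite /= (dnf_ok_sem HP) => -[//|] //.
  by case: g HP => // a g' HP; apply: IH; apply/dnf_sem_step.
apply: (proj2 (safety_dnf_sem P)) => w; elim: w P g H => [|a w IH] P g H Hw.
  exact/asboolP/(safe_from_ok H).
case: g H Hw => // b g' H [Eab Hw]; subst b.
by apply/dnf_sem_step; exact: IH (safe_from_step H) Hw.
Qed.

End DisjunctiveNormalForm.

Lemma sHML_of_sHMLF (phi : form) : guarded phi -> closedF phi -> is_sHMLF phi ->
  exists psi : form, is_sHML psi /\ guarded psi /\ closedF psi /\
    forall g, semF psi (@empty_env Act) g <-> semF phi (@empty_env Act) g.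
Proof.
move=> Gphi Cphi Sphi; set A := subsems phi (@empty_env Act).
have safeA (i : 'I_(size A)) : safety (atom i).
  have /List.Forall_forall := safety_subsems Sphi (fun=> safety0).
  by apply; exact: atom_In.
have derivA (i : 'I_(size A)) a : dnf_definable A (deriv a (atom i)).
  have /List.Forall_forall := dnf_definable_deriv_subsems (List.incl_refl A) Gphi
    (fun _ _ => dnf_definable0 A).
  by apply; exact: atom_In.
have A_gt0 : 0 < size A by rewrite /A subsemsE.
pose i0 := Ordinal A_gt0.
have atom_i0 : atom i0 = semF phi (@empty_env Act) by rewrite /atom /= /A subsemsE.
pose Qs := {set {set 'I_(size A)}}.
exists (safety_formula (@dnf_step A) (@dnf_ok A) #|Qs| [::] [set [set i0]]).
have [sHMLpsi Gpsi] := safety_formula_sHML (@dnf_step A) (@dnf_ok A) #|Qs| [::] [set [set i0]].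
split=> //; split=> //; split; first by move=> X /safety_formula_free [].
move=> g; rewrite safety_formula_correct -dnf_sem_safe_from //.
by rewrite dnf_sem_atom atom_i0.
Qed.

Lemma cHML_of_cHMLF (phi : form) : guarded phi -> closedF phi -> is_cHMLF phi ->
  exists psi : form, is_cHML psi /\ guarded psi /\ closedF psi /\
    forall g, semF psi (@empty_env Act) g <-> semF phi (@empty_env Act) g.
Proof.
move=> Gphi Cphi Cf.
have := @sHML_of_sHMLF (dual phi); rewrite guarded_dual closedF_dual is_sHMLF_dual.
move=> /(_ Gphi Cphi Cf) [psi [Spsi [Gpsi [Cpsi Epsi]]]].
exists (dual psi); rewrite is_cHML_dual guarded_dual closedF_dual.
split=> //; split=> //; split=> // g.
rewrite semF_dual_closed // Epsi semF_dual_closed //.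
by split=> [/contrapT|Hg /(_ Hg)].
Qed.

End Fragments.

Theorem mainTheorem14 (Act : finType) :
  (forall phi : form Act, guarded phi -> closedF phi -> is_sHMLF phi ->
     exists psi : form Act, is_sHML psi /\ guarded psi /\ closedF psi /\
       forall g, semF psi (@empty_env Act) g <-> semF phi (@empty_env Act) g) /\
  (forall phi : form Act, guarded phi -> closedF phi -> is_cHMLF phi ->
     exists psi : form Act, is_cHML psi /\ guarded psi /\ closedF psi /\
       forall g, semF psi (@empty_env Act) g <-> semF phi (@empty_env Act) g).
Proof. by split=> phi; [exact: sHML_of_sHMLF | exact: cHML_of_cHMLF]. Qed.
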